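(* Let $q$ be a prime power and $\mathcal{L}$ a non-empty set of lines of $\mathrm{PG}(n,q)$ satisfying (Pt), (Pl), (Sd) and (To) (see context). Suppose $\mathcal{L}$ contains a pentagon with vertices $A,B,C,D,E$, and let $U=\langle A,B,C,D,E\rangle$. Then $|\mathcal{L}_U|\ge 5q$ and $\dim(U)=4$.
   Context: (Pt): every point of $\mathrm{PG}(n,q)$ lies on $0$ or $q+1$ lines of $\mathcal{L}$. (Pl): every plane contains $0$, $1$ or $q+1$ lines of $\mathcal{L}$. (Sd): every solid ($3$-dimensional subspace) contains $0$, $1$, $q+1$ or $2q+1$ lines of $\mathcal{L}$. (To): $|\mathcal{L}|\le q^5+q^4+q^3+q^2+q+1$. For a subspace $U$, $\mathcal{L}_U$ is the set of lines of $\mathcal{L}$ contained in $U$. A pentagon of $\mathcal{L}$ with vertices $A,B,C,D,E$ is a set of five pairwise distinct points such that the lines $AB,BC,CD,DE,EA$ all belong to $\mathcal{L}$ and are pairwise distinct. *)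

From HB Require Import structures.
From mathcomp Require Import all_boot all_order all_algebra.
Set Implicit Arguments. Unset Strict Implicit. Unset Printing Implicit Defensive.
Import GRing.Theory.
Local Open Scope ring_scope.

(* PG(n,q) = projective space of the vector space 'rV[F]_(n.+1) over a finite
   field F with q = #|F| elements.  Projective subspaces of projective
   dimension k are vector subspaces of dimension k+1. *)

Import VectorInternalTheory.
Section PG.
Variables (F : finFieldType) (n : nat).
HB.instance Definition _ := [Countable of {vspace 'rV[F]_(n.+1)} by <:].
HB.instance Definition _ := [Finite of {vspace 'rV[F]_(n.+1)} by <:].
End PG.

Definition PGsub (F : finFieldType) (n : nat) := {vspace 'rV[F]_(n.+1)}.

Definition is_point F n (U : PGsub F n) := \dim U == 1%N.
Definition is_line  F n (U : PGsub F n) := \dim U == 2%N.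
Definition is_plane F n (U : PGsub F n) := \dim U == 3%N.
Definition is_solid F n (U : PGsub F n) := \dim U == 4%N.

Definition LinesIn F n (L : {set PGsub F n}) (U : PGsub F n) :=
  [set l in L | (l <= U)%VS].

Definition cond_Pt F n (L : {set PGsub F n}) :=
  forall P : PGsub F n, is_point P ->
    let k := #|[set l in L | (P <= l)%VS]| in k = 0%N \/ k = (#|F| + 1)%N.

Definition cond_Pl F n (L : {set PGsub F n}) :=
  forall P : PGsub F n, is_plane P ->
    let k := #|LinesIn L P| in [\/ k = 0%N, k = 1%N | k = (#|F| + 1)%N].

Definition cond_Sd F n (L : {set PGsub F n}) :=
  forall S : PGsub F n, is_solid S ->
    let k := #|LinesIn L S| in
    [\/ k = 0%N, k = 1%N, k = (#|F| + 1)%N | k = (2 * #|F| + 1)%N].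

Definition cond_To F n (L : {set PGsub F n}) :=
  let q := #|F| in (#|L| <= q^5 + q^4 + q^3 + q^2 + q + 1)%N.

Definition pentagon F n (L : {set PGsub F n}) (A B C D E : PGsub F n) :=
  [/\ [/\ is_point A, is_point B, is_point C, is_point D & is_point E],
      uniq [:: A; B; C; D; E],
      [/\ (A + B)%VS \in L, (B + C)%VS \in L, (C + D)%VS \in L,
          (D + E)%VS \in L & (E + A)%VS \in L]
    & uniq [:: (A + B)%VS; (B + C)%VS; (C + D)%VS; (D + E)%VS; (E + A)%VS]].

From HB Require Import structures.
From mathcomp Require Import all_boot all_order all_algebra.
From mathcomp Require Import zify.

Set Implicit Arguments.
Unset Strict Implicit.
Unset Printing Implicit Defensive.

(** Through each vertex Y of the pentagon pass two lines of L, spanning a plane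
  that by (Pl) contains q + 1 lines of L.  Every line of L through Y lies in
  that plane: otherwise the plane and the two planes it spans with the two
  pentagon lines would be three planes of one solid, pairwise sharing at most
  one line, hence carrying at least 3q > 2q + 1 lines of L, against (Sd).  So
  the pencil of L at each vertex is the set of lines of L in such a plane, and
  by (Pt) it has q + 1 elements.  Pencils at adjacent vertices share only the
  pentagon line joining them, and pencils at non-adjacent vertices X, Z are
  disjoint, since the line XZ lies in the plane at the middle vertex Y and
  would then pass through Y.  Inclusion-exclusion gives at least
  5(q + 1) - 5 = 5q lines of L in U, and as a subspace of dimension at most 4
  carries at most 2q + 1 < 5q of them, U has dimension 5. *)

Lemma card_setI_bigcup_le (T : finType) (A : nat -> {set T}) (C : {set T}) k :
  (#|(\bigcup_(i < k) A i) :&: C| <= \sum_(i < k) #|A i :&: C|)%N.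
Proof.
elim: k => [|k IHk]; first by rewrite !big_ord0 set0I cards0.
rewrite !big_ord_recr /= setIUl; apply: leq_trans (leq_card_setU _ _) _.
by rewrite leq_add2r.
Qed.

Lemma card_bigcup_bonferroni (T : finType) (A : nat -> {set T}) k :
  (\sum_(i < k) #|A i|
     <= #|\bigcup_(i < k) A i| + \sum_(i < k) \sum_(j < i) #|A j :&: A i|)%N.
Proof.
elim: k => [|k IHk]; first by rewrite !big_ord0.
rewrite !big_ord_recr /=; move: IHk.
have := @card_setI_bigcup_le _ A (A k) k.
have := cardsUI (\bigcup_(i < k) A i) (A k).
(* [big_ord_recr] leaves these sums and this union only convertible, not
   syntactically equal, to those of the hypotheses; [set] identifies them. *)
set S := \sum_(i < k) _; set P := \sum_(i < k) _; set Q := \sum_(i < k) _.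
set U := \bigcup_(i < k) _; lia.
Qed.

Lemma card_setU3_ge (T : finType) (X Y Z : {set T}) :
  (#|X| + #|Y| + #|Z|
     <= #|X :|: Y :|: Z| + (#|X :&: Y| + #|X :&: Z| + #|Y :&: Z|))%N.
Proof.
have := card_bigcup_bonferroni (nth set0 [:: X; Y; Z]) 3.
by rewrite !big_ord_recr !big_ord0 /= !set0U; lia.
Qed.

Lemma card_setU5_cycle (T : finType) (X1 X2 X3 X4 X5 : {set T}) k :
  #|X1| = (k + 1)%N -> #|X2| = (k + 1)%N -> #|X3| = (k + 1)%N ->
  #|X4| = (k + 1)%N -> #|X5| = (k + 1)%N ->
  (#|X1 :&: X2| <= 1)%N -> (#|X2 :&: X3| <= 1)%N -> (#|X3 :&: X4| <= 1)%N ->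
  (#|X4 :&: X5| <= 1)%N -> (#|X1 :&: X5| <= 1)%N ->
  X1 :&: X3 = set0 -> X1 :&: X4 = set0 -> X2 :&: X4 = set0 ->
  X2 :&: X5 = set0 -> X3 :&: X5 = set0 ->
  (5 * k <= #|X1 :|: X2 :|: X3 :|: X4 :|: X5|)%N.
Proof.
move=> c1 c2 c3 c4 c5 i12 i23 i34 i45 i15 e13 e14 e24 e25 e35.
have := card_bigcup_bonferroni (nth set0 [:: X1; X2; X3; X4; X5]) 5.
rewrite !big_ord_recr !big_ord0 /= !set0U e13 e14 e24 e25 e35 !cards0; lia.
Qed.

Section DimensionFacts.
Variables (K : fieldType) (vT : vectType K).
Implicit Types U V W Y m : {vspace vT}.

Lemma subv_dim_eq U V : (U <= V)%VS -> (\dim V <= \dim U)%N -> U = V.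
Proof. by move=> sUV leVU; apply/eqP; rewrite eqEdim sUV. Qed.

Lemma dimv_cap_lt U V : ~~ (U <= V)%VS -> (\dim (U :&: V) < \dim U)%N.
Proof.
move=> nsUV; rewrite (ltn_leqif (dimv_leqif_eq (capvSl U V))).
by apply: contra nsUV => /eqP <-; exact: capvSr.
Qed.

Lemma dimv_add_point W Y :
  \dim Y = 1%N -> ~~ (Y <= W)%VS -> \dim (W + Y) = (\dim W).+1.
Proof.
move=> dimY nsYW; have := dimv_sum_cap W Y; have := dimv_cap_lt nsYW.
by rewrite capvC dimY; lia.
Qed.

Lemma dimv_add_meet W m Y : \dim Y = 1%N -> \dim m = 2 ->
  (Y <= W)%VS -> (Y <= m)%VS -> ~~ (m <= W)%VS -> \dim (W + m) = (\dim W).+1.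
Proof.
move=> dimY dimm sYW sYm nsmW.
have : (\dim Y <= \dim (W :&: m))%N by apply: dimvS; rewrite subv_cap sYW sYm.
have := dimv_sum_cap W m; have := dimv_cap_lt nsmW.
by rewrite capvC dimY dimm; lia.
Qed.

End DimensionFacts.

Ltac subv_sum := match goal with
  | |- is_true (?P <= ?U + ?V)%VS =>
      first [ exact: subvv
            | apply: (subv_trans _ (addvSl U V)); subv_sum
            | apply: (subv_trans _ (addvSr U V)); subv_sum ]
  | |- _ => exact: subvv end.

Ltac solve_subv := rewrite ?subv_add; repeat (apply/andP; split); subv_sum.

Section Incidence.
Variables (F : finFieldType) (n : nat).
Implicit Types (X Y Z W l m P Q : PGsub F n).

Lemma dim_join_points X Z :
  is_point X -> is_point Z -> X != Z -> \dim (X + Z) = 2.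
Proof.
move=> /eqP dimX /eqP dimZ neqXZ; rewrite dimv_add_point ?dimX //.
apply: contra neqXZ => sZX; apply/eqP/esym/subv_dim_eq => //.
by rewrite dimX dimZ.
Qed.

Lemma line_eq_join l X Z : is_line l -> is_point X -> is_point Z -> X != Z ->
  (X <= l)%VS -> (Z <= l)%VS -> l = (X + Z)%VS.
Proof.
move=> /eqP diml pX pZ neqXZ sXl sZl; apply/esym/subv_dim_eq.
  by rewrite subv_add sXl sZl.
by rewrite diml dim_join_points.
Qed.

Lemma dim_meeting_lines l m Y : is_line l -> is_line m -> l != m ->
  is_point Y -> (Y <= l)%VS -> (Y <= m)%VS -> \dim (l + m) = 3.
Proof.
move=> /eqP diml /eqP dimm neqlm /eqP dimY sYl sYm.
rewrite (dimv_add_meet dimY dimm sYl sYm) ?diml //.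
by apply: contra neqlm => smL; apply/eqP/esym/subv_dim_eq; rewrite ?diml ?dimm.
Qed.

Variable L : {set PGsub F n}.
Hypothesis L_lines : forall l, l \in L -> is_line l.
Local Notation q := #|F|.

Definition pencil P := [set l in L | (P <= l)%VS].

Lemma LinesInS U V : (U <= V)%VS -> LinesIn L U \subset LinesIn L V.
Proof.
move=> sUV; apply/subsetP => l; rewrite !inE => /andP[-> sLU] /=.
exact: subv_trans sLU sUV.
Qed.

Lemma LinesInI U V : LinesIn L U :&: LinesIn L V = LinesIn L (U :&: V)%VS.
Proof. by apply/setP => l; rewrite !inE subv_cap andbACA andbb. Qed.

Lemma card_LinesIn_le1 W : (\dim W <= 2)%N -> (#|LinesIn L W| <= 1)%N.
Proof.
move=> dimW; rewrite -(cards1 W); apply: subset_leq_card.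
apply/subsetP => l; rewrite !inE => /andP[lL slW]; apply/eqP.
by apply: subv_dim_eq slW _; rewrite (eqP (L_lines lL)).
Qed.

Lemma card_LinesInI_planes P Q : is_plane P -> is_plane Q -> P != Q ->
  (#|LinesIn L P :&: LinesIn L Q| <= 1)%N.
Proof.
move=> /eqP dimP /eqP dimQ neqPQ; rewrite LinesInI card_LinesIn_le1 //.
rewrite -ltnS -dimP dimv_cap_lt //; apply: contra neqPQ => sPQ.
by apply/eqP/subv_dim_eq; rewrite ?dimP ?dimQ.
Qed.

Lemma card_pencilI_le1 X Z : is_point X -> is_point Z -> X != Z ->
  (#|pencil X :&: pencil Z| <= 1)%N.
Proof.
move=> pX pZ neqXZ; rewrite -(cards1 (X + Z)%VS); apply: subset_leq_card.
apply/subsetP => l; rewrite !inE => /andP[/andP[lL sXl] /andP[_ sZl]].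
by apply/eqP; apply: line_eq_join => //; exact: L_lines.
Qed.

Hypotheses (L_Pt : cond_Pt L) (L_Pl : cond_Pl L) (L_Sd : cond_Sd L).

Lemma card_LinesIn_dim_le4 W : (\dim W <= 4)%N -> (#|LinesIn L W| <= 2 * q + 1)%N.
Proof.
move=> dimW; case: (ltngtP (\dim W) 3) => [dimW_lt3 | dimW_gt3 | dimW3].
- have dimW2 : (\dim W <= 2)%N by lia.
  by have := card_LinesIn_le1 dimW2; lia.
- have dimW4 : \dim W = 4 by lia.
  by case: (L_Sd (introT eqP dimW4)) => ->; lia.
- by case: (L_Pl (introT eqP dimW3)) => ->; lia.
Qed.

Lemma card_pencil Y l : is_point Y -> l \in L -> (Y <= l)%VS ->
  #|pencil Y| = (q + 1)%N.
Proof.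
move=> pY lL sYl; have : (0 < #|pencil Y|)%N.
  by apply/card_gt0P; exists l; rewrite inE lL.
by case: (L_Pt pY) => ->.
Qed.

Lemma card_LinesIn_meeting_lines l m Y : l \in L -> m \in L -> l != m ->
  is_point Y -> (Y <= l)%VS -> (Y <= m)%VS ->
  #|LinesIn L (l + m)%VS| = (q + 1)%N.
Proof.
move=> lL mL neqlm pY sYl sYm.
have dimlm := dim_meeting_lines (L_lines lL) (L_lines mL) neqlm pY sYl sYm.
have : (1 < #|LinesIn L (l + m)%VS|)%N.
  by apply/card_gt1P; exists l, m; rewrite !inE lL mL addvSl addvSr.
by case: (L_Pl (introT eqP dimlm)) => ->.
Qed.

Lemma card_LinesIn_planes3 P1 P2 P3 :
  is_plane P1 -> is_plane P2 -> is_plane P3 -> P1 != P2 -> P1 != P3 -> P2 != P3 ->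
  (#|LinesIn L P1| + #|LinesIn L P2| + #|LinesIn L P3|
     <= #|LinesIn L (P1 + P2 + P3)%VS| + 3)%N.
Proof.
move=> pP1 pP2 pP3 neq12 neq13 neq23.
have := card_setU3_ge (LinesIn L P1) (LinesIn L P2) (LinesIn L P3).
have := card_LinesInI_planes pP1 pP2 neq12; have := card_LinesInI_planes pP1 pP3 neq13.
have := card_LinesInI_planes pP2 pP3 neq23.
have : (#|LinesIn L P1 :|: LinesIn L P2 :|: LinesIn L P3|
          <= #|LinesIn L (P1 + P2 + P3)%VS|)%N.
  by apply: subset_leq_card; rewrite !subUset !LinesInS //; solve_subv.
lia.
Qed.

Lemma pencil_sub_plane l1 l2 Y : l1 \in L -> l2 \in L -> l1 != l2 ->
  is_point Y -> (Y <= l1)%VS -> (Y <= l2)%VS ->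
  pencil Y \subset LinesIn L (l1 + l2)%VS.
Proof.
move=> l1L l2L neq12 pY sYl1 sYl2; apply/subsetP => m; rewrite !inE.
case/andP=> mL sYm; rewrite mL /=; apply/idPn => nsm12.
have dimm := eqP (L_lines mL).
have neqm1 : m != l1 by apply: contraNneq nsm12 => ->; exact: addvSl.
have neqm2 : m != l2 by apply: contraNneq nsm12 => ->; exact: addvSr.
have plane_of k : k \in L -> m != k -> (Y <= k)%VS -> is_plane (k + m)%VS.
  move=> kL neqmk sYk; apply/eqP.
  by apply: dim_meeting_lines (L_lines kL) (L_lines mL) _ pY sYk sYm; rewrite eq_sym.
have p12 : is_plane (l1 + l2)%VS.
  exact/eqP/(dim_meeting_lines (L_lines l1L) (L_lines l2L) neq12 pY sYl1 sYl2).
have [p1m p2m] := (plane_of _ l1L neqm1 sYl1, plane_of _ l2L neqm2 sYl2).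
have neq12_1m : (l1 + l2)%VS != (l1 + m)%VS.
  by apply: contraNneq nsm12 => ->; exact: addvSr.
have neq12_2m : (l1 + l2)%VS != (l2 + m)%VS.
  by apply: contraNneq nsm12 => ->; exact: addvSr.
have neq1m_2m : (l1 + m)%VS != (l2 + m)%VS.
  apply: contraNneq nsm12 => eq_planes.
  have -> : (l1 + l2)%VS = (l1 + m)%VS.
    apply: subv_dim_eq; last by rewrite (eqP p12) (eqP p1m).
    by rewrite subv_add addvSl eq_planes addvSl.
  exact: addvSr.
have dim_solid : (\dim (l1 + l2 + (l1 + m) + (l2 + m)) <= 4)%N.
  have <- : \dim (l1 + l2 + m) = 4.
    have sY12 := subv_trans sYl1 (addvSl l1 l2).
    by rewrite (dimv_add_meet (eqP pY) dimm sY12 sYm nsm12) (eqP p12).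
  by apply: dimvS; solve_subv.
have q_gt1 : (1 < q)%N := card_finNzRing_gt1 F.
have := card_LinesIn_planes3 p12 p1m p2m neq12_1m neq12_2m neq1m_2m.
have := card_LinesIn_dim_le4 dim_solid.
rewrite (card_LinesIn_meeting_lines l1L l2L neq12 pY sYl1 sYl2).
rewrite (card_LinesIn_meeting_lines l1L mL _ pY sYl1 sYm); last by rewrite eq_sym.
rewrite (card_LinesIn_meeting_lines l2L mL _ pY sYl2 sYm); last by rewrite eq_sym.
by move: (#|LinesIn L _|) => k; clear -q_gt1; lia.
Qed.

Lemma pencil_eq_plane l1 l2 Y : l1 \in L -> l2 \in L -> l1 != l2 ->
  is_point Y -> (Y <= l1)%VS -> (Y <= l2)%VS -> pencil Y = LinesIn L (l1 + l2)%VS.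
Proof.
move=> l1L l2L neq12 pY sYl1 sYl2; apply/eqP; rewrite eqEcard.
rewrite (pencil_sub_plane l1L l2L neq12 pY sYl1 sYl2).
rewrite (card_pencil pY l1L sYl1).
by rewrite (card_LinesIn_meeting_lines l1L l2L neq12 pY sYl1 sYl2) leqnn.
Qed.

Lemma pencilI_nonadjacent X Y Z : is_point X -> is_point Y -> is_point Z ->
  X != Z -> (X + Y)%VS \in L -> (Y + Z)%VS \in L -> (X + Y)%VS != (Y + Z)%VS ->
  pencil X :&: pencil Z = set0.
Proof.
move=> pX pY pZ neqXZ XYL YZL neqXY_YZ; apply/setP => l; rewrite !inE.
apply/negbTE/negP => /andP[/andP[lL sXl] /andP[_ sZl]].
have eq_l := line_eq_join (L_lines lL) pX pZ neqXZ sXl sZl.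
have : l \in pencil Y.
  rewrite (pencil_eq_plane XYL YZL neqXY_YZ pY) ?addvSl ?addvSr //.
  by rewrite inE lL eq_l /=; solve_subv.
rewrite inE lL /= => sYl.
have eq_line k : k \in L -> (k <= l)%VS -> k = l.
  move=> kL skl; apply: subv_dim_eq skl _.
  by rewrite (eqP (L_lines lL)) (eqP (L_lines kL)).
have sXYl : (X + Y <= l)%VS by rewrite subv_add sXl sYl.
have sYZl : (Y + Z <= l)%VS by rewrite subv_add sYl sZl.
by move: neqXY_YZ; rewrite (eq_line _ XYL sXYl) (eq_line _ YZL sYZl) eqxx.
Qed.

Lemma card_LinesIn_pentagon A B C D E : pentagon L A B C D E ->
  (5 * q <= #|LinesIn L (A + B + C + D + E)%VS|)%N.
Proof.
case=> [[pA pB pC pD pE] uniq_pts [ABL BCL CDL DEL EAL] uniq_lines].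
move: uniq_pts uniq_lines; rewrite /= !inE !negb_or -!andbA.
case/and5P=> nAB nAC nAD nAE /and5P[nBC nBD nBE nCD /and3P[nCE nDE _]].
case/and5P=> nAB_BC _ _ nAB_EA /and5P[nBC_CD _ _ nCD_DE /and3P[_ nDE_EA _]].
have nDA : D != A by rewrite eq_sym.
have nEB : E != B by rewrite eq_sym.
have nEA_AB : (E + A)%VS != (A + B)%VS by rewrite eq_sym.
have eqPA := pencil_eq_plane EAL ABL nEA_AB pA (addvSr E A) (addvSl A B).
have eqPB := pencil_eq_plane ABL BCL nAB_BC pB (addvSr A B) (addvSl B C).
have eqPC := pencil_eq_plane BCL CDL nBC_CD pC (addvSr B C) (addvSl C D).
have eqPD := pencil_eq_plane CDL DEL nCD_DE pD (addvSr C D) (addvSl D E).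
have eqPE := pencil_eq_plane DEL EAL nDE_EA pE (addvSr D E) (addvSl E A).
have sub : pencil A :|: pencil B :|: pencil C :|: pencil D :|: pencil E
             \subset LinesIn L (A + B + C + D + E)%VS.
  rewrite eqPA eqPB eqPC eqPD eqPE !subUset.
  by rewrite !LinesInS //; solve_subv.
apply: leq_trans (subset_leq_card sub); apply: card_setU5_cycle.
- exact: card_pencil pA ABL (addvSl A B).
- exact: card_pencil pB BCL (addvSl B C).
- exact: card_pencil pC CDL (addvSl C D).
- exact: card_pencil pD DEL (addvSl D E).
- exact: card_pencil pE EAL (addvSl E A).
- exact: card_pencilI_le1 pA pB nAB.
- exact: card_pencilI_le1 pB pC nBC.
- exact: card_pencilI_le1 pC pD nCD.
- exact: card_pencilI_le1 pD pE nDE.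
- exact: card_pencilI_le1 pA pE nAE.
- exact: pencilI_nonadjacent pA pB pC nAC ABL BCL nAB_BC.
- by rewrite setIC (pencilI_nonadjacent pD pE pA nDA DEL EAL nDE_EA).
- exact: pencilI_nonadjacent pB pC pD nBD BCL CDL nBC_CD.
- by rewrite setIC (pencilI_nonadjacent pE pA pB nEB EAL ABL nEA_AB).
- exact: pencilI_nonadjacent pC pD pE nCE CDL DEL nCD_DE.
Qed.

End Incidence.

Theorem lemma4 (F : finFieldType) (n : nat) (L : {set PGsub F n})
  (A B C D E : PGsub F n) :
  (forall l, l \in L -> is_line l) ->
  L != set0 ->
  cond_Pt L -> cond_Pl L -> cond_Sd L -> cond_To L ->
  pentagon L A B C D E ->
  let U := (A + B + C + D + E)%VS in
  (5 * #|F| <= #|LinesIn L U|)%N /\ \dim U = 5%N.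
Proof.
move=> L_lines _ L_Pt L_Pl L_Sd _ pent U.
have lines_U := card_LinesIn_pentagon L_lines L_Pt L_Pl L_Sd pent.
split=> //.
have dimU : (\dim U <= 5)%N.
  case: pent => [[/eqP dimA /eqP dimB /eqP dimC /eqP dimD /eqP dimE] _ _ _].
  have dim_add (V W : PGsub F n) := (dimv_add_leqif V W).1.
  have := dim_add (A + B + C + D)%VS E; have := dim_add (A + B + C)%VS D.
  have := dim_add (A + B)%VS C; have := dim_add A B.
  by rewrite /U dimA dimB dimC dimD dimE; lia.
have q_gt1 : (1 < #|F|)%N := card_finNzRing_gt1 F.
apply/eqP; rewrite eqn_leq dimU /= ltnNge; apply/negP => dimU_le4.
move: lines_U (card_LinesIn_dim_le4 L_lines L_Pl L_Sd dimU_le4); rewrite -/U.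
by move: #|LinesIn L U| => k; clear -q_gt1; lia.
Qed.
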